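(* Let $\pi$ be the policy induced by Dual Gradient Descent with Proxy Assignments (any stepsize and initial prices). For every sample path $\omega$, $$V^\pi[\omega]=\sum_{k\in[K]}\widetilde V^\pi_k\Big[\omega_k\,\Big|\,Z^\pi\big(\tfrac{(k-1)T}K\big)\Big]-\sum_{k\in[K]}\sum_{j\in[n]}\sum_{i\in[m]}c_{ji}\widetilde Z^\pi_{ji,k}\big(\tfrac{kT}K:T\big)-\sum_{k\in[K]}\frac TK\sum_{k'>k}\sum_{i\in[m]}k'g_{k'i}\Bigg(\frac{Z^\pi_i(kT/K)+\widetilde Z^\pi_{i,k}\big(\frac{kT}K:\frac{k'T}K\big)}{k'T/K}\Bigg).$$
   Context: Model. There are $m$ resources and $n$ arrival types; type $j$ has cost vector $c_j\in\mathbb R^m$ and allowed resources $\mathcal S_j\subseteq[m]$. The horizon has $T$ periods partitioned into $K$ epochs ($T$ a multiple of $K$), epoch $k$ being $\mathcal T_k=\{(k-1)T/K+1,\dots,kT/K\}$. In period $t$ one arrival of type $j^t$ occurs; $\omega=(j^1,\dots,j^T)$, $\omega_k=(j^t)_{t\in\mathcal T_k}$. Feasible decisions in period $t$: $\mathcal X^t=\{x\in\{0,1\}^m:\sum_ix_i\le1,\ x_i=0\ \forall i\notin\mathcal S_{j^t}\}$. $Z^\pi_{ji}(t)$ is the number of type-$j$ arrivals assigned to resource $i$ in periods $1..t$, $Z^\pi_i=\sum_jZ^\pi_{ji}$, $Z(t_1:t_2)=Z(t_2)-Z(t_1)$. Each epoch $k$ and resource $i$ has a target $\rho_{ki}\in[0,1]$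 and a convex $L$-Lipschitz $g_{ki}:[0,1]\to\mathbb R_{\ge0}$ with $g_{ki}(\rho_{ki})=0$. The cost is $V^\pi[\omega]=\sum_{j,i}c_{ji}Z^\pi_{ji}(T)+\frac TK\sum_k\sum_ik\,g_{ki}\big(Z^\pi_i(kT/K)/(kT/K)\big)$. Dual Gradient Descent with Proxy Assignments (stepsize $\eta$, initial $\mu^1\in\mathbb R^{K\times m}$): for $t=1,\dots,T$, with $k$ the epoch of $t$: if $t=(k-1)T/K+1$ set $\mu^t_{k'}=\mu^1_{k'}$ for $k'\ge k$; observe $j=j^t$; for every $k'\ge k$ compute the proxy assignment $\tilde x^t_{k'}\in\arg\min_{x\in\mathcal X^t}\sum_ix_i(c_{ji}-\mu^t_{k'i})$; implement $x^t=\tilde x^t_k$; compute $a^t\in\arg\min_{a\in[0,1]^{(K+1-k)\times m}}\sum_{k'\ge k}k'\sum_ig_{k'i}\big(\frac{\sum_{t'\le(k-1)T/K}x^{t'}_i}{k'T/K}+\sum_{k''=k}^{k'}\frac{a_{k''i}}{k'}\big)+\sum_{k'\ge k}\sum_i\mu^t_{k'i}a_{k'i}$; update $\mu^{t+1}_{k'}=\mu^t_{k'}+\eta(a^t_{k'}-\tilde x^t_{k'})$ for $k'\ge k$. Proxy quantities. For $k\le k_1\le k_2\le K$, let $\widetilde Z^\pi_{ji,k}\big(\frac{(k_1-1)T}K:\frac{k_2T}K\big)=\sum_{t\in\mathcal T_k}\sum_{k''=k_1}^{k_2}\tilde x^t_{k''i}\mathbf 1\{j^t=j\}$ and $\widetilde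 Z^\pi_{i,k}(\cdot)=\sum_j\widetilde Z^\pi_{ji,k}(\cdot)$ (so $\frac{kT}K:T$ corresponds to $k_1=k+1$, $k_2=K$, and $(k-1)T/K:T$ to $k_1=k,k_2=K$). The cumulative proxy cost in epoch $k$ given $z\in\mathbb N^m$ is $$\widetilde V^\pi_k[\omega_k\mid z]=\sum_{j,i}c_{ji}\widetilde Z^\pi_{ji,k}\big(\tfrac{(k-1)T}K:T\big)+\frac TK\sum_{k'\ge k}\sum_ik'g_{k'i}\Bigg(\frac{z_i+\widetilde Z^\pi_{i,k}\big(\frac{(k-1)T}K:\frac{k'T}K\big)}{k'T/K}\Bigg).$$ *)

From mathcomp Require Import all_boot all_order all_algebra.
Set Implicit Arguments. Unset Strict Implicit. Unset Printing Implicit Defensive.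
Import Order.TTheory GRing.Theory Num.Theory.
Local Open Scope ring_scope.

(* Conventions: periods t = 1..T, epochs k = 1..K, epoch length D = T %/ K.
   Resources are 'I_m, arrival types 'I_n.  The sample path is
   omega : nat -> 'I_n (omega t = j^t, only t in 1..T matters).
   Prices mu t k' i = mu^t_{k' i}, proxies xt t k' i = tilde x^t_{k' i},
   a t k' i = a^t_{k' i}; g k i, rho k i for epochs k. *)

Definition epoch (D t : nat) : nat := (t.-1 %/ D).+1.

Definition feasible (R : realFieldType) (m n : nat) (S : 'I_n -> {set 'I_m})
  (j : 'I_n) (x : 'I_m -> R) : Prop :=
  [/\ (forall i, x i = 0 \/ x i = 1), \sum_i x i <= 1
    & (forall i, i \notin S j -> x i = 0)].

Definition xdec (R : realFieldType) (m : nat) (D : nat)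
  (xt : nat -> nat -> 'I_m -> R) (t : nat) (i : 'I_m) : R :=
  xt t (epoch D t) i.

Definition Zji (R : realFieldType) (m n D : nat) (omega : nat -> 'I_n)
  (xt : nat -> nat -> 'I_m -> R) (j : 'I_n) (i : 'I_m) (t : nat) : R :=
  \sum_(1 <= s < t.+1) xdec D xt s i * (omega s == j)%:R.

Definition Zi (R : realFieldType) (m n D : nat) (omega : nat -> 'I_n)
  (xt : nat -> nat -> 'I_m -> R) (i : 'I_m) (t : nat) : R :=
  \sum_j Zji D omega xt j i t.

Definition aobj (R : realFieldType) (m K D : nat) (g : nat -> 'I_m -> R -> R)
  (xt : nat -> nat -> 'I_m -> R) (mu : nat -> nat -> 'I_m -> R)
  (t k : nat) (b : nat -> 'I_m -> R) : R :=
  \sum_(k <= k' < K.+1) (k'%:R * \sum_i g k' i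
      ((\sum_(1 <= s < (k.-1 * D).+1) xdec D xt s i) / (k' * D)%:R
       + \sum_(k <= k'' < k'.+1) b k'' i / k'%:R))
  + \sum_(k <= k' < K.+1) \sum_i mu t k' i * b k' i.

(* (mu, xt, a) is an execution of Dual Gradient Descent with Proxy Assignments
   (stepsize eta, initial prices mu1) on sample path omega, for some
   tie-breaking in the argmins. *)
Definition DGDPA_run (R : realFieldType) (m n K T : nat)
  (c : 'I_n -> 'I_m -> R) (S : 'I_n -> {set 'I_m}) (g : nat -> 'I_m -> R -> R)
  (eta : R) (mu1 : nat -> 'I_m -> R) (omega : nat -> 'I_n)
  (mu xt a : nat -> nat -> 'I_m -> R) : Prop :=
  let D := (T %/ K)%N in
  forall t, (1 <= t <= T)%N ->
  let k := epoch D t in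
  [/\ (if t == (k.-1 * D).+1
       then forall k' i, (k <= k' <= K)%N -> mu t k' i = mu1 k' i
       else forall k' i, (k <= k' <= K)%N ->
              mu t k' i = mu t.-1 k' i + eta * (a t.-1 k' i - xt t.-1 k' i)),
      (forall k', (k <= k' <= K)%N ->
         feasible S (omega t) (xt t k') /\
         forall y, feasible S (omega t) y ->
           \sum_i xt t k' i * (c (omega t) i - mu t k' i)
             <= \sum_i y i * (c (omega t) i - mu t k' i)),
      (forall k' i, (k <= k' <= K)%N -> 0 <= a t k' i <= 1)
    & (forall b : nat -> 'I_m -> R,
         (forall k' i, (k <= k' <= K)%N -> 0 <= b k' i <= 1) ->
         aobj K D g xt mu t k (a t) <= aobj K D g xt mu t k b)].

Definition Vcost (R : realFieldType) (m n K T : nat) (c : 'I_n -> 'I_m -> R)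
  (g : nat -> 'I_m -> R -> R) (omega : nat -> 'I_n)
  (xt : nat -> nat -> 'I_m -> R) : R :=
  let D := (T %/ K)%N in
  \sum_j \sum_i c j i * Zji D omega xt j i T
  + D%:R * \sum_(1 <= k < K.+1) \sum_i
      k%:R * g k i (Zi D omega xt i (k * D) / (k * D)%:R).

(* tilde Z_{ji,k}((k1-1)T/K : k2 T/K) *)
Definition Ztji (R : realFieldType) (m n D : nat) (omega : nat -> 'I_n)
  (xt : nat -> nat -> 'I_m -> R) (j : 'I_n) (i : 'I_m) (k k1 k2 : nat) : R :=
  \sum_((k.-1 * D).+1 <= t < (k * D).+1)
     \sum_(k1 <= k'' < k2.+1) xt t k'' i * (omega t == j)%:R.

Definition Zti (R : realFieldType) (m n D : nat) (omega : nat -> 'I_n)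
  (xt : nat -> nat -> 'I_m -> R) (i : 'I_m) (k k1 k2 : nat) : R :=
  \sum_j Ztji D omega xt j i k k1 k2.

Definition Vtilde (R : realFieldType) (m n K T : nat) (c : 'I_n -> 'I_m -> R)
  (g : nat -> 'I_m -> R -> R) (omega : nat -> 'I_n)
  (xt : nat -> nat -> 'I_m -> R) (k : nat) (z : 'I_m -> R) : R :=
  let D := (T %/ K)%N in
  \sum_j \sum_i c j i * Ztji D omega xt j i k k K
  + D%:R * \sum_(k <= k' < K.+1) \sum_i
      k'%:R * g k' i ((z i + Zti D omega xt i k k k') / (k' * D)%:R).

Definition convex_on01 (R : realFieldType) (f : R -> R) : Prop :=
  forall x y l, 0 <= x <= 1 -> 0 <= y <= 1 -> 0 <= l <= 1 ->
    f (l * x + (1 - l) * y) <= l * f x + (1 - l) * f y.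

Definition lipschitz_on01 (R : realFieldType) (L : R) (f : R -> R) : Prop :=
  forall x y, 0 <= x <= 1 -> 0 <= y <= 1 -> `|f x - f y| <= L * `|x - y|.

From mathcomp Require Import all_boot all_order all_algebra.
From mathcomp Require Import ring zify.
Set Implicit Arguments. Unset Strict Implicit.
Import Order.TTheory GRing.Theory Num.Theory.
Local Open Scope ring_scope.

(* In epoch [k] the proxy count [Zti k k k'] splits into the
   implemented epoch-[k] decisions [Zti k k k] plus the proxies [Zti k k.+1 k']
   for the later epochs, and [Zi (k D) = Zi ((k-1) D) + Zti k k k].  Hence
   [Vtilde_k] minus the proxy terms for the later epochs is exactly the
   realized cost of epoch [k], and these epoch costs add up to [V]. *)

Lemma epochE (D k t : nat) : (k.-1 * D < t <= k * D)%N -> epoch D t = k.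
Proof.
case: k => [|k] /=; first by rewrite mul0n => /andP[/leq_trans H /H].
case: D => [|D]; first by rewrite !muln0 => /andP[/leq_trans H /H].
move=> ht; rewrite /epoch; congr S; apply/anti_leq/andP; split.
- by rewrite -ltnS ltn_divLR //; lia.
- by rewrite leq_divRL //; lia.
Qed.

Section EpochAccounting.
Variables (R : realFieldType) (m n K T : nat).
Variables (c : 'I_n -> 'I_m -> R) (g : nat -> 'I_m -> R -> R).
Variables (omega : nat -> 'I_n) (xt : nat -> nat -> 'I_m -> R).

Local Notation D := (T %/ K)%N.
Local Notation Zji := (Zji D omega xt).
Local Notation Zi := (Zi D omega xt).
Local Notation Ztji := (Ztji D omega xt).
Local Notation Zti := (Zti D omega xt).

Lemma Ztji_cat j i k k1 k2 k3 : (k1 <= k2.+1 <= k3.+1)%N ->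
  Ztji j i k k1 k3 = Ztji j i k k1 k2 + Ztji j i k k2.+1 k3.
Proof.
case/andP=> hk12 hk23; rewrite /Ztji -big_split /=; apply: eq_bigr => t _.
exact: big_cat_nat.
Qed.

Lemma Zti_cat i k k1 k2 k3 : (k1 <= k2.+1 <= k3.+1)%N ->
  Zti i k k1 k3 = Zti i k k1 k2 + Zti i k k2.+1 k3.
Proof.
by move=> hk; rewrite /Zti -big_split /=; apply: eq_bigr => j _; apply: Ztji_cat.
Qed.

Lemma Zji_epoch j i k : (0 < k)%N ->
  Zji j i (k * D) = Zji j i (k.-1 * D) + Ztji j i k k k.
Proof.
move=> hk; rewrite /Zji /Ztji (big_cat_nat _ (n := (k.-1 * D).+1)) //=; last first.
  by rewrite ltnS leq_mul2r leq_pred orbT.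
congr (_ + _); apply: eq_big_nat => t ht.
by rewrite big_nat1 /xdec (epochE ht).
Qed.

Lemma Zi_epoch i k : (0 < k)%N -> Zi i (k * D) = Zi i (k.-1 * D) + Zti i k k k.
Proof.
by move=> hk; rewrite /Zi /Zti -big_split; apply: eq_bigr => j _; apply: Zji_epoch.
Qed.

Lemma Zji_sum_epochs j i N :
  Zji j i (N * D) = \sum_(1 <= k < N.+1) Ztji j i k k k.
Proof.
elim: N => [|N IH]; first by rewrite mul0n /Zji !big_geq.
by rewrite Zji_epoch //= IH [RHS](big_nat_recr N.+1).
Qed.

Definition epoch_cost (k : nat) : R :=
  \sum_j \sum_i c j i * Ztji j i k k k
  + D%:R * \sum_i k%:R * g k i (Zi i (k * D) / (k * D)%:R).

Lemma Vcost_sum_epochs : (K %| T)%N ->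
  Vcost K T c g omega xt = \sum_(1 <= k < K.+1) epoch_cost k.
Proof.
move=> hKT; rewrite /Vcost /epoch_cost big_split /= -mulr_sumr; congr (_ + _).
have {2}-> : T = (K * D)%N by rewrite mulnC divnK.
rewrite [RHS]exchange_big; apply: eq_bigr => j _.
rewrite [RHS]exchange_big; apply: eq_bigr => i _.
by rewrite Zji_sum_epochs mulr_sumr.
Qed.

Lemma Vtilde_epoch k : (0 < k <= K)%N ->
  Vtilde K T c g omega xt k (fun i => Zi i (k.-1 * D))
  - \sum_j \sum_i c j i * Ztji j i k k.+1 K
  - D%:R * \sum_(k.+1 <= k' < K.+1) \sum_i
       k'%:R * g k' i ((Zi i (k * D) + Zti i k k.+1 k') / (k' * D)%:R)
  = epoch_cost k.
Proof.
case/andP=> hk hkK; rewrite /Vtilde /epoch_cost.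
have split_cost : \sum_j \sum_i c j i * Ztji j i k k K =
    \sum_j \sum_i c j i * Ztji j i k k k + \sum_j \sum_i c j i * Ztji j i k k.+1 K.
  rewrite -big_split; apply: eq_bigr => j _; rewrite -big_split; apply: eq_bigr => i _.
  by rewrite (Ztji_cat _ _ _ (k2 := k)) ?mulrDr //; lia.
have shift_penalty : \sum_(k.+1 <= k' < K.+1) \sum_i k'%:R * g k' i
      ((Zi i (k.-1 * D) + Zti i k k k') / (k' * D)%:R)
    = \sum_(k.+1 <= k' < K.+1) \sum_i k'%:R * g k' i
      ((Zi i (k * D) + Zti i k k.+1 k') / (k' * D)%:R).
  apply: eq_big_nat => k' /andP[hk' _]; apply: eq_bigr => i _.
  by rewrite (Zti_cat _ _ (k2 := k)) ?addrA -?Zi_epoch //; lia.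
rewrite split_cost big_ltn ?ltnS // shift_penalty.
under [X in _ + _ * (X + _) - _ - _]eq_bigr => i _ do rewrite -Zi_epoch //.
ring.
Qed.

End EpochAccounting.

Theorem proposition3 (R : realFieldType) (m n K T : nat)
  (hK : (0 < K)%N) (hKT : (K %| T)%N)
  (c : 'I_n -> 'I_m -> R) (S : 'I_n -> {set 'I_m})
  (rho : nat -> 'I_m -> R) (g : nat -> 'I_m -> R -> R) (L : R)
  (hrho : forall k i, (1 <= k <= K)%N -> 0 <= rho k i <= 1)
  (hgconv : forall k i, (1 <= k <= K)%N -> convex_on01 (g k i))
  (hglip : forall k i, (1 <= k <= K)%N -> lipschitz_on01 L (g k i))
  (hgnn : forall k i (x : R), (1 <= k <= K)%N -> 0 <= x <= 1 -> 0 <= g k i x)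
  (hgrho : forall k i, (1 <= k <= K)%N -> g k i (rho k i) = 0)
  (eta : R) (mu1 : nat -> 'I_m -> R) (omega : nat -> 'I_n)
  (mu xt a : nat -> nat -> 'I_m -> R)
  (hrun : DGDPA_run K T c S g eta mu1 omega mu xt a) :
  let D := (T %/ K)%N in
  Vcost K T c g omega xt =
    \sum_(1 <= k < K.+1) Vtilde K T c g omega xt k
                            (fun i => Zi D omega xt i (k.-1 * D))
  - \sum_(1 <= k < K.+1) \sum_j \sum_i c j i * Ztji D omega xt j i k k.+1 K
  - \sum_(1 <= k < K.+1) D%:R * \sum_(k.+1 <= k' < K.+1) \sum_i
       k'%:R * g k' i ((Zi D omega xt i (k * D) + Zti D omega xt i k k.+1 k')
                        / (k' * D)%:R).
Proof.
move=> D; rewrite -!sumrB (Vcost_sum_epochs _ _ _ _ hKT).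
by apply: eq_big_nat => k hk; rewrite Vtilde_epoch.
Qed.
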